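(* Let $F$ be $\mathbb{C}$ or $\mathbb{R}$ and let $\mathfrak{L}$ be a solvable (left) Leibniz algebra over $F$ of dimension $r+1$ whose nilradical is the $r$-dimensional abelian algebra $A(r)$, so that $\mathfrak{L}$ has a basis $\{n_1,\dots,n_r,x\}$ with $n_1,\dots,n_r$ a basis of $A(r)$. Let $R\in F^{r\times r}$ be the matrix defined by $[n_i,x]=\sum_j R_{ij}n_j$ (the right action of $x$ on $A(r)$). If $R$ is nonsingular, then $\mathfrak{L}$ is a Lie algebra, i.e. $[y,z]=-[z,y]$ for all $y,z\in\mathfrak{L}$.
   Context: A (left) Leibniz algebra is a vector space with bilinear product satisfying $[x,[y,z]]=[[x,y],z]+[y,[x,z]]$. Solvable: derived series $\mathfrak{L}^{(1)}=[\mathfrak{L},\mathfrak{L}]$, $\mathfrak{L}^{(n+1)}=[\mathfrak{L}^{(n)},\mathfrak{L}^{(n)}]$ eventually zero. Nilradical: the unique maximal nilpotent ideal (nilpotent meaning the lower central series $\mathfrak{L}^2=[\mathfrak{L},\mathfrak{L}]$, $\mathfrak{L}^{k+1}=[\mathfrak{L},\mathfrak{L}^k]$ eventually vanishes). $A(r)$ is the $r$-dimensional algebra with all products zero. *)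

From HB Require Import structures.
From mathcomp Require Import all_boot all_order all_algebra.
From mathcomp Require Import complex.
From mathcomp Require Import reals.
Set Implicit Arguments. Unset Strict Implicit. Unset Printing Implicit Defensive.
Import GRing.Theory Num.Theory.
Local Open Scope ring_scope.

Section Leibniz.
Variables (F : fieldType) (V : vectType F) (br : V -> V -> V).

Definition is_left_leibniz : Prop :=
  [/\ (forall (a : F) (y z w : V), br (a *: y + z) w = a *: br y w + br z w),
      (forall (a : F) (y z w : V), br w (a *: y + z) = a *: br w y + br w z) &
      (forall x y z : V, br x (br y z) = br (br x y) z + br y (br x z))].

(* [A, B] : the subspace spanned by all products [a, b], a in A, b in B
   (by bilinearity, spanned by products of basis vectors) *)
Definition brsp (A B : {vspace V}) : {vspace V} :=
  <<[seq br a b | a <- vbasis A, b <- vbasis B]>>%VS.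

Fixpoint derived (k : nat) : {vspace V} :=
  if k is k'.+1 then brsp (derived k') (derived k') else fullv.

Definition solvable_alg : Prop := exists k, derived k = 0%VS.

Fixpoint lcs (I : {vspace V}) (k : nat) : {vspace V} :=
  if k is k'.+1 then brsp I (lcs I k') else I.

Definition nilpotent_sub (I : {vspace V}) : Prop := exists k, lcs I k = 0%VS.

Definition is_ideal (I : {vspace V}) : Prop :=
  forall a b : V, a \in I -> br a b \in I /\ br b a \in I.

Definition is_nilradical (N : {vspace V}) : Prop :=
  [/\ is_ideal N, nilpotent_sub N &
      forall I, is_ideal I -> nilpotent_sub I -> (I <= N)%VS].

Definition abelian_sub (N : {vspace V}) : Prop :=
  forall a b : V, a \in N -> b \in N -> br a b = 0.

End Leibniz.

Definition lemma4p2_over (F : fieldType) : Prop :=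
  forall (V : vectType F) (br : V -> V -> V) (r : nat) (N : {vspace V})
         (n : r.-tuple V) (x : V) (R : 'M[F]_r),
    is_left_leibniz br ->
    solvable_alg br ->
    \dim (fullv : {vspace V}) = r.+1 ->
    is_nilradical br N -> \dim N = r -> abelian_sub br N ->
    basis_of N n -> x \notin N ->
    (forall i : 'I_r, br (tnth n i) x = \sum_(j < r) R i j *: tnth n j) ->
    R \in unitmx ->
    forall y z : V, br y z = - br z y.

From HB Require Import structures.
From mathcomp Require Import all_boot all_order all_algebra.
From mathcomp Require Import complex.
From mathcomp Require Import reals.
Set Implicit Arguments. Unset Strict Implicit. Unset Printing Implicit Defensive.
Import GRing.Theory Num.Theory.
Local Open Scope ring_scope.

(* In a left Leibniz algebra left multiplication by a square [a, a] is zero,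
   so the algebra is Lie as soon as every square vanishes.  Here L = N + F x
   with N an abelian ideal: squaring m + x and using that right multiplication
   by x is injective on N (R is invertible) gives [x, m] = -[m, x] and
   [x, x] = 0, whence every square vanishes. *)

Section LeibnizAlgebra.
Variables (F : fieldType) (V : vectType F) (br : V -> V -> V).
Hypothesis leibniz : is_left_leibniz br.

Lemma br0l w : br 0 w = 0.
Proof.
case: leibniz => brL _ _; have := brL 1 0 0 w; rewrite !scale1r addr0 => h.
by apply: (addrI (br 0 w)); rewrite -h addr0.
Qed.

Lemma br0r w : br w 0 = 0.
Proof.
case: leibniz => _ brR _; have := brR 1 0 0 w; rewrite !scale1r addr0 => h.
by apply: (addrI (br w 0)); rewrite -h addr0.
Qed.

Lemma brZl a y w : br (a *: y) w = a *: br y w.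
Proof. by case: leibniz => brL _ _; rewrite -[a *: y]addr0 brL br0l addr0. Qed.

Lemma brZr a y w : br w (a *: y) = a *: br w y.
Proof. by case: leibniz => _ brR _; rewrite -[a *: y]addr0 brR br0r addr0. Qed.

Lemma brDl y z w : br (y + z) w = br y w + br z w.
Proof. by case: leibniz => brL _ _; rewrite -[y]scale1r brL !scale1r. Qed.

Lemma brDr y z w : br w (y + z) = br w y + br w z.
Proof. by case: leibniz => _ brR _; rewrite -[y]scale1r brR !scale1r. Qed.

Lemma br_suml (I : finType) (G : I -> V) w :
  br (\sum_i G i) w = \sum_i br (G i) w.
Proof. by apply: (big_morph (br^~ w)) => [y z|]; [apply: brDl | apply: br0l]. Qed.

Lemma br_sq_l a z : br (br a a) z = 0.
Proof.
case: leibniz => _ _ jac.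
by apply: (addIr (br a (br a z))); rewrite add0r -jac.
Qed.

Lemma br_sq_sum_l y z w : br (br y z + br z y) w = 0.
Proof.
have := br_sq_l (y + z) w.
by rewrite brDr !brDl !br_sq_l add0r addr0 addrC.
Qed.

Lemma br_anticomm_of_alternating :
  (forall y, br y y = 0) -> forall y z, br y z = - br z y.
Proof.
move=> alt y z; apply/eqP; rewrite -subr_eq0 opprK.
by have := alt (y + z); rewrite !brDl !brDr !alt add0r addr0 => ->.
Qed.

Section AbelianIdealOfCodimensionOne.
Variables (r : nat) (N : {vspace V}) (n : r.-tuple V) (x : V) (R : 'M[F]_r).
Hypotheses (idealN : is_ideal br N) (abelianN : abelian_sub br N).
Hypotheses (basis_n : basis_of N n) (xNN : x \notin N).
Hypothesis (br_n_x : forall i, br (tnth n i) x = \sum_(j < r) R i j *: tnth n j).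

Let span_n : span n = N. Proof. by case/andP: basis_n => /eqP. Qed.
Let free_n : free n. Proof. by case/andP: basis_n. Qed.

Definition coords (u : V) : 'rV[F]_r := \row_i coord n i u.

Lemma coords_br_x u : u \in N -> coords (br u x) = coords u *m R.
Proof.
rewrite -span_n => /coord_span uN; apply/rowP => j; rewrite !mxE.
rewrite {1}uN br_suml.
under eq_bigr => i _ do rewrite brZl -tnth_nth br_n_x scaler_sumr.
rewrite exchange_big /=.
under eq_bigr => k _ do
  (under eq_bigr => i _ do rewrite scalerA; rewrite -scaler_suml (tnth_nth 0)).
by rewrite coord_sum_free //; apply: eq_bigr => i _; rewrite mxE.
Qed.

Lemma coords_eq0 u : u \in N -> coords u = 0 -> u = 0.
Proof.
rewrite -span_n => /coord_span eu c0; rewrite eu; apply: big1 => i _.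
by move/rowP: c0 => /(_ i); rewrite !mxE => ->; rewrite scale0r.
Qed.

Hypothesis unit_R : R \in unitmx.

Lemma br_x_inj u : u \in N -> br u x = 0 -> u = 0.
Proof.
move=> uN ux0; apply: coords_eq0 => //.
have cR0 : coords u *m R = 0.
  by rewrite -coords_br_x // ux0; apply/rowP => i; rewrite !mxE linear0.
by rewrite -(mulmxK unit_R (coords u)) cR0 mul0mx.
Qed.

Lemma br_x_anticomm m : m \in N -> br x m = - br m x.
Proof.
move=> mN; apply/eqP; rewrite -subr_eq0 opprK; apply/eqP/br_x_inj.
  by have [xm mx] := idealN x mN; rewrite rpredD.
by rewrite br_sq_sum_l.
Qed.

Hypothesis dim_full : \dim (fullv : {vspace V}) = (\dim N).+1.

Lemma addv_line_full : (N + <[x]>)%VS = fullv.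
Proof.
apply/eqP; rewrite eqEdim subvf /= dim_full.
rewrite (ltn_leqif (dimv_leqif_eq (addvSl N <[x]>))).
apply: contra xNN => /eqP ->; exact/(subvP (addvSr N _))/memv_line.
Qed.

Lemma decomp_addv_line y : exists m c, m \in N /\ y = m + c *: x.
Proof.
have : y \in (N + <[x]>)%VS by rewrite addv_line_full memvf.
by case/memv_addP => m mN [v /vlineP [c ->] ->]; exists m, c.
Qed.

Lemma br_x_x : br x x = 0.
Proof.
have [m [c [mN e]]] := decomp_addv_line (br x x).
have h : br m x + c *: m + c *: (c *: x) = 0.
  by have := br_sq_l x x; rewrite {1}e brDl brZl e scalerDr addrA.
have mxN : br m x \in N by case: (idealN x mN).
(* [x, x] has no x-component: otherwise c^2 x = -([m, x] + c m) would lie in N. *)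
have c0 : c = 0.
  apply: contraNeq xNN => cn0.
  have cc_x : (c * c) *: x \in N.
    have -> : (c * c) *: x = - (br m x + c *: m).
      by apply: (addrI (br m x + c *: m)); rewrite -scalerA h subrr.
    by rewrite rpredN rpredD // rpredZ.
  by move: (rpredZ (c * c)^-1 cc_x); rewrite scalerA mulVf ?mulf_neq0 // scale1r.
rewrite e c0 scale0r addr0; apply: br_x_inj mN _.
by move: h; rewrite c0 !scale0r !addr0.
Qed.

Lemma br_alternating y : br y y = 0.
Proof.
have [m [c [mN ->]]] := decomp_addv_line y.
rewrite !brDl !brDr !brZl !brZr br_x_x abelianN // br_x_anticomm //.
by rewrite !scaler0 scalerN !add0r addr0 subrr.
Qed.

End AbelianIdealOfCodimensionOne.

End LeibnizAlgebra.

Lemma lemma4p2_over_field (F : fieldType) : lemma4p2_over F.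
Proof.
move=> V br r N n x R leib _ dimV [idealN _ _] dimN abN bas xN brnx unitR.
apply: br_anticomm_of_alternating => // y.
by apply: (br_alternating leib idealN abN bas xN brnx unitR); rewrite dimV dimN.
Qed.

Theorem lemma4p2 (R : realType) :
  lemma4p2_over R /\ lemma4p2_over (complex R).
Proof. by split; apply: lemma4p2_over_field. Qed.
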